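(* A well-founded order $P$ is up-regular if and only if for every trunk $T$ of $P$ such that the set of levels of $P$ meeting $T$ has a largest element $h$, the set $T\cup L_h$ is a trunk, where $L_h=\{x:\mathrm{Level}(x)=h\}$. In particular, in an up-regular well-founded order, every trunk that is maximal under inclusion and meets a highest level $L_h$ contains $L_h$.
   Context: Orders are partial orders; $x\sim y$ means $x\ne y$ and $x,y$ incomparable. For a well-founded order $P$, $\mathrm{Level}(x)=\sup\{\mathrm{Level}(y)+1:y<x\}$. An element $x$ is up-regular if for all $y,z$ with $\mathrm{Level}(x)<\mathrm{Level}(y)=\mathrm{Level}(z)$ we have $x<y\iff x<z$; $P$ is up-regular if all its elements are. A trunk of $P$ is a subset $T$ such that for pairwise distinct $x,y,z\in T$, $x\sim y$ and $y\sim z$ imply $x\sim z$. *)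

From Stdlib Require Import Classical.

Definition strict {T : Type} (le : T -> T -> Prop) (x y : T) : Prop :=
  le x y /\ x <> y.

Record wf_order {T : Type} (le : T -> T -> Prop) : Prop := {
  wfo_refl : forall x, le x x;
  wfo_antisym : forall x y, le x y -> le y x -> x = y;
  wfo_trans : forall x y z, le x y -> le y z -> le x z;
  wfo_wf : well_founded (strict le)
}.

Definition incomp {T : Type} (le : T -> T -> Prop) (x y : T) : Prop :=
  x <> y /\ ~ le x y /\ ~ le y x.

(* A (strict) well-order, used as the codomain of the Level function
   (standing in for the class of ordinals). *)
Record well_order {O : Type} (ltO : O -> O -> Prop) : Prop := {
  wo_irrefl : forall a, ~ ltO a a;
  wo_trans : forall a b c, ltO a b -> ltO b c -> ltO a c;
  wo_total : forall a b, ltO a b \/ a = b \/ ltO b a;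
  wo_wf : well_founded ltO
}.

Definition leO {O : Type} (ltO : O -> O -> Prop) (a b : O) : Prop :=
  ltO a b \/ a = b.

(* Level x = sup { Level y + 1 : y < x }, i.e. Level x is the least element
   of O strictly above every Level y with y < x. *)
Definition is_level {T O : Type} (le : T -> T -> Prop) (ltO : O -> O -> Prop)
    (Level : T -> O) : Prop :=
  forall x,
    (forall y, strict le y x -> ltO (Level y) (Level x)) /\
    (forall o, (forall y, strict le y x -> ltO (Level y) o) -> leO ltO (Level x) o).

Definition up_regular_elt {T O : Type} (le : T -> T -> Prop) (ltO : O -> O -> Prop)
    (Level : T -> O) (x : T) : Prop :=
  forall y z, ltO (Level x) (Level y) -> Level y = Level z ->
    (strict le x y <-> strict le x z).

Definition up_regular {T O : Type} (le : T -> T -> Prop) (ltO : O -> O -> Prop)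
    (Level : T -> O) : Prop :=
  forall x, up_regular_elt le ltO Level x.

Definition trunk {T : Type} (le : T -> T -> Prop) (S : T -> Prop) : Prop :=
  forall x y z, S x -> S y -> S z -> x <> y -> y <> z -> x <> z ->
    incomp le x y -> incomp le y z -> incomp le x z.

Definition largest_level_meeting {T O : Type} (ltO : O -> O -> Prop)
    (Level : T -> O) (S : T -> Prop) (h : O) : Prop :=
  (exists x, S x /\ Level x = h) /\ (forall y, S y -> leO ltO (Level y) h).

Definition level_set {T O : Type} (Level : T -> O) (h : O) (x : T) : Prop :=
  Level x = h.

Definition maximal_trunk {T : Type} (le : T -> T -> Prop) (S : T -> Prop) : Prop :=
  trunk le S /\
  forall S', trunk le S' -> (forall x, S x -> S' x) -> (forall x, S' x -> S x).

(* If [h] is the top level met by a trunk [S], pick a witness [w] of [S] at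
   level [h].  By up-regularity an element of lower level is incomparable to
   an element of [L_h] iff it is incomparable to [w], so every forbidden
   configuration in [S] ∪ [L_h] transfers to one inside [S].  Conversely,
   adding [L_(Level y)] to the two-element trunk {x, y} with
   [Level x < Level y] forces [x < y] to propagate to all of [L_(Level y)]. *)

From Stdlib Require Import Classical.

Lemma incomp_sym {T : Type} {le : T -> T -> Prop} {a b : T} :
  incomp le a b -> incomp le b a.
Proof. intros [nab [nlab nlba]]; repeat split; auto. Qed.

Lemma trunk_pair {T : Type} (le : T -> T -> Prop) (a b : T) :
  trunk le (fun w => w = a \/ w = b).
Proof.
  intros x y z Hx Hy Hz nxy nyz nxz.
  exfalso; destruct Hx, Hy, Hz; subst; congruence.
Qed.

Section Levels.

Context {T O : Type} {le : T -> T -> Prop} {ltO : O -> O -> Prop}.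
Context {Level : T -> O}.
Hypothesis HO : well_order ltO.
Hypothesis HL : is_level le ltO Level.

Lemma level_lt_strict {a b : T} : strict le a b -> ltO (Level a) (Level b).
Proof. exact (proj1 (HL b) a). Qed.

Lemma neq_of_level_lt {a b : T} : ltO (Level a) (Level b) -> a <> b.
Proof. intros Hab ->; exact (wo_irrefl _ HO _ Hab). Qed.

Lemma incomp_iff_not_strict {a b : T} :
  ltO (Level a) (Level b) -> (incomp le a b <-> ~ strict le a b).
Proof.
  intros Hab; pose proof (neq_of_level_lt Hab) as nab.
  split.
  - intros [_ [nlab _]] [lab _]; exact (nlab lab).
  - intros nsab; repeat split; auto.
    + intros lab; exact (nsab (conj lab nab)).
    + intros lba.
      pose proof (level_lt_strict (conj lba (not_eq_sym nab))) as Hba.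
      exact (wo_irrefl _ HO _ (wo_trans _ HO _ _ _ Hab Hba)).
Qed.

Lemma incomp_of_level_eq {a b : T} :
  Level a = Level b -> a <> b -> incomp le a b.
Proof.
  intros Eab nab.
  assert (no_strict : forall u v, Level u = Level v -> ~ strict le u v).
  { intros u v Euv suv; pose proof (level_lt_strict suv) as Luv.
    rewrite Euv in Luv; exact (wo_irrefl _ HO _ Luv). }
  repeat split; auto.
  - intros lab; exact (no_strict a b Eab (conj lab nab)).
  - intros lba; exact (no_strict b a (eq_sym Eab) (conj lba (not_eq_sym nab))).
Qed.

Section UpRegular.

Hypothesis UR : up_regular le ltO Level.

Lemma up_regular_incomp {a b c : T} :
  ltO (Level a) (Level b) -> Level b = Level c ->
  (incomp le a b <-> incomp le a c).
Proof.
  intros Lab Ebc.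
  assert (Lac : ltO (Level a) (Level c)) by (rewrite <- Ebc; exact Lab).
  rewrite (incomp_iff_not_strict Lab), (incomp_iff_not_strict Lac).
  pose proof (UR a b c Lab Ebc); tauto.
Qed.

Variables (S : T -> Prop) (h : O).
Hypothesis HS : trunk le S.
Hypothesis Hh : largest_level_meeting ltO Level S h.

Let union_top_level (x : T) : Prop := S x \/ level_set Level h x.

Lemma union_top_level_le {x : T} : union_top_level x -> leO ltO (Level x) h.
Proof. intros [Sx | Lx]; [exact (proj2 Hh x Sx) | right; exact Lx]. Qed.

Lemma union_top_level_below {x : T} : union_top_level x -> ltO (Level x) h -> S x.
Proof.
  intros [Sx | Lx] Lxh; [exact Sx |].
  unfold level_set in Lx; rewrite Lx in Lxh; destruct (wo_irrefl _ HO _ Lxh).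
Qed.

Lemma union_top_level_chain_not_le {x y z : T} :
  union_top_level x -> union_top_level y -> union_top_level z ->
  incomp le x y -> incomp le y z -> x <> z -> ~ le x z.
Proof.
  intros Hx Hy Hz Ixy Iyz nxz lxz.
  destruct (proj1 Hh) as [w [Sw Lw]].
  pose proof (level_lt_strict (conj lxz nxz)) as Lxz.
  destruct (union_top_level_le Hz) as [Lzh | Lzh].
  - assert (Lxh : ltO (Level x) h) by exact (wo_trans _ HO _ _ _ Lxz Lzh).
    pose proof (union_top_level_below Hx Lxh) as Sx.
    pose proof (union_top_level_below Hz Lzh) as Sz.
    destruct (classic (S y)) as [Sy | nSy].
    + exact (proj1 (proj2 (HS x y z Sx Sy Sz (proj1 Ixy) (proj1 Iyz) nxz Ixy Iyz)) lxz).
    + assert (Ly : Level y = h) by (destruct Hy; tauto).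
      assert (Ixw : incomp le x w).
      { apply (up_regular_incomp (a := x) (b := y)); congruence. }
      assert (Izw : incomp le z w).
      { apply (up_regular_incomp (a := z) (b := y)); [congruence | congruence |].
        exact (incomp_sym Iyz). }
      apply incomp_sym in Izw.
      exact (proj1 (proj2 (HS x w z Sx Sw Sz (proj1 Ixw) (proj1 Izw) nxz Ixw Izw)) lxz).
  - assert (Lxh : ltO (Level x) h) by (rewrite <- Lzh; exact Lxz).
    pose proof (union_top_level_below Hx Lxh) as Sx.
    assert (Lyh : ltO (Level y) h).
    { destruct (union_top_level_le Hy) as [Lyh | Lyh]; [exact Lyh | exfalso].
      assert (Ixz : incomp le x z).
      { apply (up_regular_incomp (a := x) (b := y)); congruence. }
      exact (proj1 (proj2 Ixz) lxz). }
    pose proof (union_top_level_below Hy Lyh) as Sy.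
    assert (Iyw : incomp le y w).
    { apply (up_regular_incomp (a := y) (b := z)); congruence. }
    assert (nxw : x <> w) by (apply neq_of_level_lt; congruence).
    pose proof (HS x y w Sx Sy Sw (proj1 Ixy) (proj1 Iyw) nxw Ixy Iyw) as Ixw.
    assert (Ixz : incomp le x z).
    { apply (up_regular_incomp (a := x) (b := w)); congruence. }
    exact (proj1 (proj2 Ixz) lxz).
Qed.

Lemma trunk_union_top_level : trunk le union_top_level.
Proof.
  intros x y z Hx Hy Hz nxy nyz nxz Ixy Iyz.
  repeat split; [exact nxz | |].
  - exact (union_top_level_chain_not_le Hx Hy Hz Ixy Iyz nxz).
  - exact (union_top_level_chain_not_le Hz Hy Hx (incomp_sym Iyz) (incomp_sym Ixy)
             (not_eq_sym nxz)).
Qed.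

End UpRegular.

Lemma up_regular_of_trunk_top_level :
  (forall (S : T -> Prop) (h : O), trunk le S ->
     largest_level_meeting ltO Level S h ->
     trunk le (fun x => S x \/ level_set Level h x)) ->
  up_regular le ltO Level.
Proof.
  intros Htop.
  assert (propagate : forall x y z, ltO (Level x) (Level y) -> Level y = Level z ->
                        strict le x y -> strict le x z).
  { intros x y z Lxy Eyz sxy.
    destruct (classic (y = z)) as [<- | nyz]; [exact sxy |].
    apply NNPP; intros nsxz.
    assert (Lxz : ltO (Level x) (Level z)) by congruence.
    assert (Hpair : largest_level_meeting ltO Level (fun w => w = x \/ w = y) (Level y)).
    { split; [exists y; auto |].
      intros w [-> | ->]; [left; exact Lxy | right; reflexivity]. }
    pose proof (Htop _ _ (trunk_pair le x y) Hpair) as Hunion.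
    assert (Ixz : incomp le x z) by exact (proj2 (incomp_iff_not_strict Lxz) nsxz).
    assert (Izy : incomp le z y)
      by exact (incomp_of_level_eq (eq_sym Eyz) (not_eq_sym nyz)).
    assert (Ixy : incomp le x y).
    { apply (Hunion x z y); unfold level_set; auto.
      - exact (proj1 Ixz).
      - exact (neq_of_level_lt Lxy). }
    exact (proj1 (incomp_iff_not_strict Lxy) Ixy sxy). }
  intros x y z Lxy Eyz; split; apply propagate; congruence.
Qed.

End Levels.

Theorem mainTheorem12 (T O : Type) (le : T -> T -> Prop) (ltO : O -> O -> Prop)
    (Level : T -> O)
    (HP : wf_order le) (HO : well_order ltO) (HL : is_level le ltO Level) :
  (up_regular le ltO Level <->
     (forall (S : T -> Prop) (h : O),
        trunk le S -> largest_level_meeting ltO Level S h ->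
        trunk le (fun x => S x \/ level_set Level h x)))
  /\
  (up_regular le ltO Level ->
     forall (S : T -> Prop) (h : O),
       maximal_trunk le S -> largest_level_meeting ltO Level S h ->
       forall x, level_set Level h x -> S x).
Proof.
  split; [split |].
  - intros UR S h HS Hh; exact (trunk_union_top_level HO HL UR S h HS Hh).
  - exact (up_regular_of_trunk_top_level HO HL).
  - intros UR S h [HS Hmax] Hh x Hx.
    exact (Hmax _ (trunk_union_top_level HO HL UR S h HS Hh) (fun y Sy => or_introl Sy) x
             (or_intror Hx)).
Qed.
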